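(* For every integer $n\ge 1$ and every real $x>0$, \[ \left[\frac{1}{n}\left(\frac{x}{(n-1)!}-\left(\left(\frac{(n-1)!}{x}\right)^{1/n}+1\right)^{-n}\right)\right]^{-\frac{1}{n+1}} <\left((-1)^{n-1}\psi^{(n)}\right)^{-1}(x) <\left(\frac{(n-1)!}{x}\right)^{1/n}+\frac{1}{2}. \]
   Context: $\Gamma$ is the Euler gamma function and $\psi=\Gamma'/\Gamma$ is the digamma function; $\psi^{(n)}$ denotes its $n$-th derivative. For each integer $n\ge1$ the map $t\mapsto(-1)^{n-1}\psi^{(n)}(t)=n!\sum_{k\ge0}(t+k)^{-(n+1)}$ is a strictly decreasing bijection from $(0,\infty)$ onto $(0,\infty)$, and $\left((-1)^{n-1}\psi^{(n)}\right)^{-1}$ denotes its inverse function. *)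

From Stdlib Require Import Reals Arith Factorial.
Open Scope R_scope.

Definition polygamma_term (n : nat) (t : R) (k : nat) : R :=
  INR (fact n) / (t + INR k) ^ (n + 1).

(* psi_abs n t v  :<->  (-1)^(n-1) * psi^(n)(t) = v,
   using the series representation given in the context:
   (-1)^(n-1) psi^(n)(t) = n! * sum_{k>=0} (t+k)^{-(n+1)}. *)
Definition psi_abs (n : nat) (t v : R) : Prop :=
  infinite_sum (polygamma_term n t) v.

Definition ub (n : nat) (x : R) : R :=
  Rpower (INR (fact (n - 1)) / x) (1 / INR n) + 1 / 2.

Definition lb (n : nat) (x : R) : R :=
  Rpower
    ((1 / INR n) *
       (x / INR (fact (n - 1))
        - / (Rpower (INR (fact (n - 1)) / x) (1 / INR n) + 1) ^ n))
    (- (1 / INR (n + 1))).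

(* Put [S(y) = sum_k (y+k)^-(n+1)] and [a = ((n-1)!/x)^(1/n)], so that the hypothesis reads
   [S(y) = x/n! = int_a^oo u^-(n+1) du = sum_k J(a+k)] with [J(p) = int_p^(p+1) u^-(n+1) du].
   Upper bound: by convexity the midpoint rule underestimates, [(c+1/2)^-(n+1) < J(c)], so
   [y >= a + 1/2] would give [S(y) < sum_k J(y-1/2+k) <= x/n!].
   Lower bound: let [m(p) = J(p)^(-1/(n+1))], the point of [[p, p+1]] where [u^-(n+1)] takes
   its mean value.  The power mean inequality [J_n(p)^((n+2)/(n+1)) < J_(n+1)(p)] makes
   [m' > 1], so [m(p+1) > m(p) + 1]; hence [y <= m(a)] would propagate to [y + k <= m(a+k)],
   strictly for [k >= 1], and give [S(y) > sum_k J(a+k) = x/n!].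
   Existence: intermediate value theorem, [S] being locally Lipschitz by the tangent-line bound
   [S(t) - S(t') <= (t'-t) (n+1) sum_k (t+k)^-(n+2)]. *)

From Stdlib Require Import Reals Factorial Ranalysis5 Lra Lia.
From Coquelicot Require Import Coquelicot.
Open Scope R_scope.

(* Weighted AM-GM reads [0 <= amgm_gap k w] for [0 <= w]. *)
Definition amgm_gap (k : nat) (w : R) : R := INR k * w ^ S k - INR (S k) * w ^ k + 1.

Lemma amgm_gap_succ (k : nat) (w : R) :
  amgm_gap (S k) w = amgm_gap k w + INR (S k) * w ^ k * (w - 1) ^ 2.
Proof. unfold amgm_gap; rewrite !S_INR; simpl; ring. Qed.

Lemma amgm_gap_nonneg (k : nat) (w : R) : 0 <= w -> 0 <= amgm_gap k w.
Proof.
  intros Hw; induction k as [|k IH]; [unfold amgm_gap; simpl; lra|].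
  rewrite amgm_gap_succ.
  assert (0 <= INR (S k) * w ^ k * (w - 1) ^ 2).
  { apply Rmult_le_pos; [| apply pow2_ge_0].
    apply Rmult_le_pos; [apply pos_INR | apply pow_le; lra]. }
  lra.
Qed.

Lemma amgm_gap_pos (k : nat) (w : R) : (1 <= k)%nat -> 0 < w -> w <> 1 -> 0 < amgm_gap k w.
Proof.
  intros Hk Hw Hw1; destruct k as [|k]; [lia|].
  rewrite amgm_gap_succ.
  assert (0 < INR (S k) * w ^ k * (w - 1) ^ 2).
  { apply Rmult_lt_0_compat; [apply Rmult_lt_0_compat; [apply lt_0_INR; lia | apply pow_lt; lra] |].
    apply pow2_gt_0; lra. }
  pose proof (amgm_gap_nonneg k w ltac:(lra)); lra.
Qed.

Lemma lt_of_is_derive_pos_except_at (h h' : R -> R) (a b u0 : R) : a < b ->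
  (forall v, a <= v <= b -> is_derive h v (h' v)) ->
  (forall v, a < v < b -> 0 <= h' v) ->
  (forall v, a < v < b -> v <> u0 -> 0 < h' v) -> h a < h b.
Proof.
  intros Hab Hd H0 H1.
  set (m := (a + b) / 2).
  assert (Hd' : forall v, a <= v <= b -> derivable_pt_lim h v (h' v))
    by (intros v Hv; apply is_derive_Reals, Hd, Hv).
  destruct (MVT_cor2 h h' a m) as [c1 [E1 R1]];
    [unfold m; lra | intros; apply Hd'; unfold m in *; lra |].
  destruct (MVT_cor2 h h' m b) as [c2 [E2 R2]];
    [unfold m; lra | intros; apply Hd'; unfold m in *; lra |].
  (* at most one of the two mean-value points can be the exceptional point [u0] *)
  assert (0 < h' c1 \/ 0 < h' c2) as [Hc | Hc].
  { destruct (Req_dec c1 u0) as [->|Hne]; [right | left]; apply H1; unfold m in *; lra. }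
  - assert (0 <= h' c2) by (apply H0; unfold m in *; lra).
    assert (0 < h' c1 * (m - a)) by (apply Rmult_lt_0_compat; unfold m; lra).
    assert (0 <= h' c2 * (b - m)) by (apply Rmult_le_pos; unfold m; lra).
    lra.
  - assert (0 <= h' c1) by (apply H0; unfold m in *; lra).
    assert (0 <= h' c1 * (m - a)) by (apply Rmult_le_pos; unfold m; lra).
    assert (0 < h' c2 * (b - m)) by (apply Rmult_lt_0_compat; unfold m; lra).
    lra.
Qed.

Lemma is_series_lt (a b : nat -> R) (la lb : R) (j : nat) :
  is_series a la -> is_series b lb ->
  (forall k, a k <= b k) -> a j < b j -> la < lb.
Proof.
  intros Ha Hb Hle Hlt.
  set (d := fun k => b k - a k).
  assert (Hd : is_series d (lb - la)).
  { apply (is_series_ext (fun k => plus (b k) (opp (a k)))); [reflexivity|].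
    apply (is_series_minus b a lb la Hb Ha). }
  assert (Hpos : forall k, 0 <= d k) by (intro k; unfold d; specialize (Hle k); lra).
  assert (Hj : d j <= sum_f_R0 d j).
  { destruct j as [|j]; simpl; [lra|]. pose proof (cond_pos_sum d j Hpos); lra. }
  pose proof (sum_incr d j (lb - la) (proj1 (is_series_Reals _ _) Hd) Hpos).
  unfold d at 1 in Hj; lra.
Qed.

(* [inv_pow_prim s] is a primitive of [- inv_pow_succ s], so [unit_int s p] is the integral of
   [u^-(s+1)] over [[p, p+1]] and [unit_int_root s p] is the point where [u^-(s+1)] takes this
   mean value; [hurwitz s t] is the Hurwitz zeta value [zeta(s+1, t)]. *)
Definition inv_pow_succ (s : nat) (u : R) : R := / u ^ S s.

Definition inv_pow_prim (s : nat) (u : R) : R := / (INR s * u ^ s).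

Definition unit_int (s : nat) (p : R) : R := inv_pow_prim s p - inv_pow_prim s (p + 1).

Definition unit_int_root (s : nat) (p : R) : R := Rpower (unit_int s p) (- / INR (S s)).

Definition hurwitz (s : nat) (t : R) : R := Series (fun k => inv_pow_succ s (t + INR k)).

Section InvPow.

Variable s : nat.

Lemma inv_pow_succ_pos (u : R) : 0 < u -> 0 < inv_pow_succ s u.
Proof. intros Hu; apply Rinv_0_lt_compat, pow_lt, Hu. Qed.

Lemma inv_pow_succ_lt (u w : R) : 0 < u -> u < w -> inv_pow_succ s w < inv_pow_succ s u.
Proof.
  intros Hu Huw; unfold inv_pow_succ; simpl.
  assert (u ^ s <= w ^ s) by (apply pow_incr; lra).
  assert (0 < u ^ s) by (apply pow_lt; lra).
  assert (u * u ^ s < w * w ^ s) by nra.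
  apply Rinv_lt_contravar; [apply Rmult_lt_0_compat |]; nra.
Qed.

Lemma inv_pow_succ_le (u w : R) : 0 < u -> u <= w -> inv_pow_succ s w <= inv_pow_succ s u.
Proof.
  intros Hu [Huw | <-]; [left; apply inv_pow_succ_lt |]; lra.
Qed.

Lemma lt_of_inv_pow_succ_lt (u w : R) : 0 < u -> 0 < w ->
  inv_pow_succ s u < inv_pow_succ s w -> w < u.
Proof.
  intros Hu Hw H; destruct (Rlt_le_dec w u) as [|Hle]; [assumption |].
  pose proof (inv_pow_succ_le u w Hu Hle); lra.
Qed.

Lemma inv_le_inv_pow_succ (u : R) : 0 < u <= 1 -> / u <= inv_pow_succ s u.
Proof.
  intros Hu; apply Rinv_le_contravar; [apply pow_lt; lra |].
  assert (u ^ s <= 1) by (rewrite <- (pow1 s); apply pow_incr; lra).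
  simpl; nra.
Qed.

Lemma inv_pow_succ_le_inv (u : R) : 1 <= u -> inv_pow_succ s u <= / u.
Proof.
  intros Hu; apply Rinv_le_contravar; [lra |].
  rewrite <- (pow_1 u) at 1; apply Rle_pow; [exact Hu | lia].
Qed.

Lemma inv_pow_succ_Rpower (v : R) : 0 < v -> inv_pow_succ s (Rpower v (- / INR (S s))) = v.
Proof.
  intros Hv; unfold inv_pow_succ.
  assert (HS : INR (S s) <> 0) by (apply not_0_INR; lia).
  rewrite <- Rpower_pow, Rpower_mult by apply exp_pos.
  replace (- / INR (S s) * INR (S s)) with (Ropp 1) by (field; exact HS).
  rewrite Rpower_Ropp, Rpower_1 by exact Hv; apply Rinv_inv.
Qed.

Lemma inv_pow_succ_tangent_gap (u m : R) : 0 < u -> 0 < m ->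
  inv_pow_succ s u - (inv_pow_succ s m - INR (S s) * inv_pow_succ (S s) m * (u - m))
  = amgm_gap (S s) (u / m) / (m ^ S s * (u / m) ^ S s).
Proof.
  intros Hu Hm; unfold inv_pow_succ, amgm_gap.
  set (w := u / m).
  assert (Hw : 0 < w) by (unfold w; apply Rdiv_lt_0_compat; lra).
  replace u with (w * m) by (unfold w; field; lra).
  rewrite Rpow_mult_distr.
  assert (0 < w ^ S s) by (apply pow_lt; lra).
  assert (0 < m ^ S s) by (apply pow_lt; lra).
  change (w ^ S (S s)) with (w * w ^ S s); change (m ^ S (S s)) with (m * m ^ S s).
  rewrite (S_INR (S s)); field; repeat split; lra.
Qed.

Lemma inv_pow_succ_tangent_lt (u m : R) : 0 < u -> 0 < m -> u <> m ->
  inv_pow_succ s m - INR (S s) * inv_pow_succ (S s) m * (u - m) < inv_pow_succ s u.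
Proof.
  intros Hu Hm Hne.
  pose proof (inv_pow_succ_tangent_gap u m Hu Hm) as E.
  assert (Hw1 : u / m <> 1).
  { intro C; apply Hne; replace u with (u / m * m) by (field; lra); rewrite C; ring. }
  assert (0 < amgm_gap (S s) (u / m) / (m ^ S s * (u / m) ^ S s)).
  { apply Rdiv_lt_0_compat; [apply amgm_gap_pos; [lia | apply Rdiv_lt_0_compat | ]; auto |].
    apply Rmult_lt_0_compat; apply pow_lt; [lra | apply Rdiv_lt_0_compat; lra]. }
  lra.
Qed.

Lemma inv_pow_succ_tangent_le (u m : R) : 0 < u -> 0 < m ->
  inv_pow_succ s m - INR (S s) * inv_pow_succ (S s) m * (u - m) <= inv_pow_succ s u.
Proof.
  intros Hu Hm; destruct (Req_dec u m) as [-> | Hne]; [lra |].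
  left; apply inv_pow_succ_tangent_lt; assumption.
Qed.

Lemma inv_pow_succ_inv (c : R) : 0 < c -> inv_pow_succ s (/ c) = c ^ S s.
Proof. intros Hc; unfold inv_pow_succ; rewrite pow_inv; apply Rinv_inv. Qed.

Lemma inv_pow_prim_succ (u : R) : inv_pow_prim (S s) u = inv_pow_succ s u / INR (S s).
Proof.
  unfold inv_pow_prim, inv_pow_succ; rewrite Rinv_mult; unfold Rdiv; apply Rmult_comm.
Qed.

Lemma weighted_amgm_gap_inv_pow_succ (v c : R) : 0 < v -> 0 < c ->
  INR (S s) / INR (S (S s)) / c * inv_pow_succ (S s) v + c ^ S s / INR (S (S s)) - inv_pow_succ s v
  = amgm_gap (S s) (/ (v * c)) * c ^ S s / INR (S (S s)).
Proof.
  intros Hv Hc; unfold inv_pow_succ, amgm_gap; rewrite !pow_inv, !Rpow_mult_distr.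
  assert (0 < v ^ S s) by (apply pow_lt; lra).
  assert (0 < c ^ S s) by (apply pow_lt; lra).
  assert (0 < INR (S (S s))) by (apply lt_0_INR; lia).
  change (v ^ S (S s)) with (v * v ^ S s); change (c ^ S (S s)) with (c * c ^ S s).
  field; repeat split; lra.
Qed.

Hypothesis s_pos : (1 <= s)%nat.

Lemma is_derive_inv_pow_prim (u : R) : 0 < u -> is_derive (inv_pow_prim s) u (- inv_pow_succ s u).
Proof.
  intros Hu; unfold inv_pow_prim, inv_pow_succ.
  assert (0 < INR s) by (apply lt_0_INR; lia).
  assert (0 < u ^ pred s) by (apply pow_lt; lra).
  assert (E : u ^ s = u * u ^ pred s) by (destruct s; [lia | reflexivity]).
  assert (0 < INR s * u ^ s) by (apply Rmult_lt_0_compat; [| apply pow_lt]; lra).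
  auto_derive; [apply Rgt_not_eq; assumption |].
  simpl; rewrite E; field; split; lra.
Qed.

Lemma Derive_inv_pow_prim (u : R) : 0 < u -> Derive (inv_pow_prim s) u = - inv_pow_succ s u.
Proof. intros Hu; apply is_derive_unique, is_derive_inv_pow_prim, Hu. Qed.

Lemma ex_derive_inv_pow_prim (u : R) : 0 < u -> ex_derive (inv_pow_prim s) u.
Proof. intros Hu; eexists; apply is_derive_inv_pow_prim, Hu. Qed.

Lemma inv_pow_prim_pos (u : R) : 0 < u -> 0 < inv_pow_prim s u.
Proof.
  intros Hu; apply Rinv_0_lt_compat, Rmult_lt_0_compat; [apply lt_0_INR; lia | apply pow_lt, Hu].
Qed.

Lemma inv_pow_prim_le (u w : R) : 0 < u -> u <= w -> inv_pow_prim s w <= inv_pow_prim s u.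
Proof.
  intros Hu Huw; apply Rinv_le_contravar.
  - apply Rmult_lt_0_compat; [apply lt_0_INR; lia | apply pow_lt, Hu].
  - apply Rmult_le_compat_l; [apply pos_INR | apply pow_incr; lra].
Qed.

Lemma inv_pow_prim_le_inv (u : R) : 1 <= u -> inv_pow_prim s u <= / u.
Proof.
  intros Hu; apply Rinv_le_contravar; [lra |].
  assert (1 <= INR s) by (apply (le_INR 1); exact s_pos).
  assert (u <= u ^ s) by (rewrite <- (pow_1 u) at 1; apply Rle_pow; assumption).
  nra.
Qed.

Lemma unit_int_pos (p : R) : 0 < p -> 0 < unit_int s p.
Proof.
  intros Hp; unfold unit_int, inv_pow_prim.
  assert (p ^ s < (p + 1) ^ s).
  { destruct s as [|r]; [lia |]; simpl.
    assert (p ^ r <= (p + 1) ^ r) by (apply pow_incr; lra).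
    assert (0 < p ^ r) by (apply pow_lt; lra).
    nra. }
  assert (0 < INR s) by (apply lt_0_INR; lia).
  assert (0 < p ^ s) by (apply pow_lt; lra).
  assert (/ (INR s * (p + 1) ^ s) < / (INR s * p ^ s)).
  { apply Rinv_lt_contravar; [apply Rmult_lt_0_compat |]; nra. }
  lra.
Qed.

Lemma inv_pow_succ_midpoint_lt (c : R) : 0 < c -> inv_pow_succ s (c + / 2) < unit_int s c.
Proof.
  intros Hc; set (m := c + / 2).
  set (K := INR (S s) * inv_pow_succ (S s) m).
  set (h := fun v => - inv_pow_prim s v - inv_pow_succ s m * v + K * (v - m) ^ 2 / 2).
  (* [h'] is the gap between [inv_pow_succ s] and its tangent at the midpoint [m] *)
  assert (Hh : h c < h (c + 1)).
  { apply (lt_of_is_derive_pos_except_at h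
             (fun v => inv_pow_succ s v - (inv_pow_succ s m - K * (v - m))) c (c + 1) m);
      [lra | | |].
    - intros v Hv; unfold h; auto_derive; [apply ex_derive_inv_pow_prim; lra |].
      rewrite Derive_inv_pow_prim by lra; field.
    - intros v Hv; unfold K; pose proof (inv_pow_succ_tangent_le v m); unfold m in *; lra.
    - intros v Hv Hne; unfold K; pose proof (inv_pow_succ_tangent_lt v m); unfold m in *; lra. }
  assert (E : h (c + 1) - h c = unit_int s c - inv_pow_succ s m) by (unfold h, unit_int, m; field).
  lra.
Qed.

End InvPow.

Section UnitIntRoot.

Variable s : nat.
Hypothesis s_pos : (1 <= s)%nat.

Let s_succ_pos : (1 <= S s)%nat := le_S _ _ s_pos.

Lemma unit_int_power_mean (q c : R) : 0 < q -> 0 < c ->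
  c ^ S (S s) = unit_int (S s) q -> unit_int s q < c ^ S s.
Proof.
  intros Hq Hc Ec.
  set (N := INR (S (S s))).
  assert (HN : 0 < N) by (apply lt_0_INR; lia).
  set (coef := INR (S s) / N / c).
  (* [h'] is a weighted AM-GM gap vanishing only at [/ c], and
     [h (q + 1) - h q = c ^ S s - unit_int s q] *)
  set (h := fun v => - coef * inv_pow_prim (S s) v + inv_pow_prim s v + c ^ S s * v / N).
  assert (Hh : h q < h (q + 1)).
  { apply (lt_of_is_derive_pos_except_at h
             (fun v => amgm_gap (S s) (/ (v * c)) * c ^ S s / N) q (q + 1) (/ c)); [lra | | |].
    - intros v Hv; unfold h.
      auto_derive; [repeat split; apply ex_derive_inv_pow_prim; auto; lra |].
      rewrite !Derive_inv_pow_prim by (auto; lra).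
      unfold coef, N; rewrite <- weighted_amgm_gap_inv_pow_succ by lra.
      change (c * c ^ s) with (c ^ S s); field; split; apply Rgt_not_eq; assumption.
    - intros v Hv.
      apply Rmult_le_pos; [apply Rmult_le_pos; [apply amgm_gap_nonneg | apply pow_le] |];
        [left; apply Rinv_0_lt_compat; nra | lra | left; apply Rinv_0_lt_compat, HN].
    - intros v Hv Hne.
      assert (Hw : / (v * c) <> 1).
      { intro C; apply Hne.
        assert (v * c = 1) by (rewrite <- (Rinv_inv (v * c)), C; apply Rinv_1).
        apply (Rmult_eq_reg_r c); [rewrite Rinv_l |]; lra. }
      apply Rdiv_lt_0_compat; [apply Rmult_lt_0_compat; [apply amgm_gap_pos | apply pow_lt] |];
        [lia | apply Rinv_0_lt_compat; nra | exact Hw | exact Hc | exact HN]. }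
  assert (E : h (q + 1) - h q = coef * unit_int (S s) q + c ^ S s / N - unit_int s q)
    by (unfold h, unit_int; field; apply Rgt_not_eq, HN).
  assert (Ecoef : coef * unit_int (S s) q + c ^ S s / N = c ^ S s).
  { rewrite <- Ec; unfold coef, N; rewrite (S_INR (S s)).
    change (c ^ S (S s)) with (c * c ^ S s); field.
    split; [| lra]; pose proof (pos_INR (S s)); lra. }
  lra.
Qed.

Lemma is_derive_unit_int (q : R) : 0 < q ->
  is_derive (unit_int s) q (- INR (S s) * unit_int (S s) q).
Proof.
  intros Hq; unfold unit_int.
  auto_derive; [repeat split; apply ex_derive_inv_pow_prim; auto; lra |].
  rewrite !Derive_inv_pow_prim, !inv_pow_prim_succ by (auto; lra).
  field; apply not_0_INR; lia.
Qed.

Lemma inv_pow_succ_unit_int_root (p : R) : 0 < p ->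
  inv_pow_succ s (unit_int_root s p) = unit_int s p.
Proof. intros Hp; apply inv_pow_succ_Rpower, unit_int_pos; assumption. Qed.

Lemma is_derive_unit_int_root (q : R) : 0 < q ->
  is_derive (unit_int_root s) q (unit_int_root s q * unit_int (S s) q / unit_int s q).
Proof.
  intros Hq; unfold unit_int_root; set (e := - / INR (S s)).
  assert (HJ := unit_int_pos s s_pos q Hq).
  assert (Hpow : is_derive (fun z => Rpower z e) (unit_int s q) (e * Rpower (unit_int s q) (e - 1)))
    by (apply is_derive_Reals, derivable_pt_lim_power, HJ).
  replace (Rpower (unit_int s q) e * unit_int (S s) q / unit_int s q)
    with ((- INR (S s) * unit_int (S s) q) * (e * Rpower (unit_int s q) (e - 1))).
  - exact (is_derive_comp _ _ q _ _ Hpow (is_derive_unit_int q Hq)).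
  - unfold Rminus; rewrite Rpower_plus, Rpower_Ropp, Rpower_1 by exact HJ.
    unfold e; field; split; [lra | apply not_0_INR; lia].
Qed.

(* With [c] the [(s+2)]-th root of [unit_int (S s) v], the power mean inequality gives
   [unit_int s v < c ^ S s], hence [/ c < unit_int_root s v] and
   [c < unit_int (S s) v / unit_int s v]. *)
Lemma one_lt_derive_unit_int_root (v : R) : 0 < v ->
  1 < unit_int_root s v * unit_int (S s) v / unit_int s v.
Proof.
  intros Hv.
  assert (HJ := unit_int_pos s s_pos v Hv).
  assert (HK := unit_int_pos (S s) s_succ_pos v Hv).
  set (c := Rpower (unit_int (S s) v) (/ INR (S (S s)))).
  assert (Hc : 0 < c) by apply exp_pos.
  assert (Ec : c ^ S (S s) = unit_int (S s) v).
  { unfold c; rewrite <- Rpower_pow, Rpower_mult by exact Hc.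
    rewrite Rinv_l by (apply not_0_INR; lia); apply Rpower_1, HK. }
  assert (Hlt := unit_int_power_mean v c Hv Hc Ec).
  assert (Hmc : / c < unit_int_root s v).
  { apply lt_of_inv_pow_succ_lt with s; [apply exp_pos | apply Rinv_0_lt_compat, Hc |].
    rewrite inv_pow_succ_unit_int_root, inv_pow_succ_inv by assumption; exact Hlt. }
  assert (HKJ : c * unit_int s v < unit_int (S s) v).
  { rewrite <- Ec; change (c ^ S (S s)) with (c * c ^ S s); apply Rmult_lt_compat_l; assumption. }
  assert (Hprod : unit_int s v < unit_int_root s v * unit_int (S s) v).
  { replace (unit_int s v) with (/ c * (c * unit_int s v)) by (field; lra).
    apply Rmult_le_0_lt_compat; try assumption; left; [apply Rinv_0_lt_compat |]; nra. }
  unfold Rdiv; apply (Rmult_lt_reg_r (unit_int s v)); [exact HJ |].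
  rewrite Rmult_1_l, Rmult_assoc, Rinv_l, Rmult_1_r by lra; exact Hprod.
Qed.

Lemma unit_int_root_succ (p : R) : 0 < p -> unit_int_root s p + 1 < unit_int_root s (p + 1).
Proof.
  intros Hp.
  cut ((fun v => unit_int_root s v - v) p < (fun v => unit_int_root s v - v) (p + 1));
    [simpl; lra |].
  apply (lt_of_is_derive_pos_except_at _
           (fun v => unit_int_root s v * unit_int (S s) v / unit_int s v - 1) p (p + 1) p);
    [lra | | |].
  - intros v Hv; apply (is_derive_minus (unit_int_root s) (fun t => t));
      [| auto_derive; reflexivity].
    apply is_derive_unit_int_root; lra.
  - intros v Hv; pose proof (one_lt_derive_unit_int_root v ltac:(lra)); lra.
  - intros v Hv _; pose proof (one_lt_derive_unit_int_root v ltac:(lra)); lra.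
Qed.

End UnitIntRoot.

Section SeriesBounds.

Variable s : nat.
Hypothesis s_pos : (1 <= s)%nat.

Lemma sum_unit_int (a : R) (N : nat) :
  sum_f_R0 (fun k => unit_int s (a + INR k)) N = inv_pow_prim s a - inv_pow_prim s (a + INR (S N)).
Proof.
  induction N as [|N IH].
  - simpl; unfold unit_int; rewrite Rplus_0_r; reflexivity.
  - rewrite tech5, IH; unfold unit_int.
    replace (a + INR (S N) + 1) with (a + INR (S (S N))) by (rewrite (S_INR (S N)); ring).
    ring.
Qed.

Lemma is_series_unit_int (a : R) : 0 < a ->
  is_series (fun k => unit_int s (a + INR k)) (inv_pow_prim s a).
Proof.
  intros Ha; apply is_series_Reals; intros eps Heps.
  destruct (INR_unbounded (/ eps)) as [N HN].
  exists N; intros k Hk; unfold R_dist; rewrite sum_unit_int.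
  assert (HkN : INR N <= INR (S k)) by (apply le_INR; lia).
  assert (H1 : 1 <= a + INR (S k)) by (pose proof (le_INR 1 (S k) ltac:(lia)); simpl in *; lra).
  assert (Hpos := inv_pow_prim_pos s s_pos (a + INR (S k)) ltac:(lra)).
  assert (Hle := inv_pow_prim_le_inv s s_pos (a + INR (S k)) H1).
  assert (/ (a + INR (S k)) < eps).
  { rewrite <- (Rinv_inv eps); apply Rinv_lt_contravar; [apply Rmult_lt_0_compat |];
      try apply Rinv_0_lt_compat; lra. }
  rewrite Rabs_left; lra.
Qed.

Lemma unit_int_root_lt_of_is_series (y a : R) : 0 < y -> 0 < a ->
  is_series (fun k => inv_pow_succ s (y + INR k)) (inv_pow_prim s a) -> unit_int_root s a < y.
Proof.
  intros Hy Ha Hser.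
  destruct (Rlt_le_dec (unit_int_root s a) y) as [| Hle]; [assumption | exfalso].
  assert (Hpos : forall k, 0 < a + INR k) by (intro k; pose proof (pos_INR k); lra).
  (* [y + k <= unit_int_root s (a + k)] propagates along [k], strictly from [k = 1] on *)
  assert (Hstrict : forall k, y + INR (S k) < unit_int_root s (a + INR (S k))).
  { induction k as [|k IH].
    - rewrite INR_1; pose proof (unit_int_root_succ s s_pos a Ha); lra.
    - rewrite (S_INR (S k)), <- !Rplus_assoc.
      pose proof (unit_int_root_succ s s_pos (a + INR (S k)) (Hpos (S k))); lra. }
  assert (Hroot : forall k, unit_int s (a + INR k) = inv_pow_succ s (unit_int_root s (a + INR k)))
    by (intro k; rewrite inv_pow_succ_unit_int_root; auto).
  assert (Hterm : forall k, unit_int s (a + INR k) <= inv_pow_succ s (y + INR k)).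
  { intro k; rewrite Hroot; apply inv_pow_succ_le; [pose proof (pos_INR k); lra |].
    destruct k as [|k]; [simpl; rewrite !Rplus_0_r; exact Hle | left; apply Hstrict]. }
  assert (Hterm1 : unit_int s (a + INR 1) < inv_pow_succ s (y + INR 1)).
  { rewrite Hroot; apply inv_pow_succ_lt; [rewrite INR_1; lra | apply (Hstrict 0%nat)]. }
  pose proof (is_series_lt _ _ _ _ 1 (is_series_unit_int a Ha) Hser Hterm Hterm1); lra.
Qed.

Lemma lt_add_half_of_is_series (y a : R) : 0 < y -> 0 < a ->
  is_series (fun k => inv_pow_succ s (y + INR k)) (inv_pow_prim s a) -> y < a + / 2.
Proof.
  intros Hy Ha Hser.
  destruct (Rlt_le_dec y (a + / 2)) as [| Hle]; [assumption | exfalso].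
  set (c := y - / 2).
  assert (Hlt : forall k, inv_pow_succ s (y + INR k) < unit_int s (c + INR k)).
  { intro k; replace (y + INR k) with (c + INR k + / 2) by (unfold c; ring).
    apply inv_pow_succ_midpoint_lt; [assumption |]; pose proof (pos_INR k); unfold c; lra. }
  pose proof (is_series_lt _ _ _ _ 0 Hser (is_series_unit_int c ltac:(unfold c; lra))
                (fun k => Rlt_le _ _ (Hlt k)) (Hlt 0%nat)).
  pose proof (inv_pow_prim_le s s_pos a c Ha ltac:(unfold c; lra)); lra.
Qed.

Lemma ex_series_hurwitz (t : R) : 0 < t -> ex_series (fun k => inv_pow_succ s (t + INR k)).
Proof.
  intros Ht; apply ex_series_incr_1.
  apply (ex_series_le (V := R_CompleteNormedModule) _ (fun k => unit_int s (t + / 2 + INR k))).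
  - intro k; change (norm _) with (Rabs (inv_pow_succ s (t + INR (S k)))).
    pose proof (pos_INR k).
    rewrite Rabs_pos_eq by (left; apply inv_pow_succ_pos; rewrite S_INR; lra).
    replace (t + INR (S k)) with (t + / 2 + INR k + / 2) by (rewrite S_INR; field).
    left; apply inv_pow_succ_midpoint_lt; auto; lra.
  - eexists; apply is_series_unit_int; auto; lra.
Qed.

Lemma hurwitz_correct (t : R) : 0 < t ->
  is_series (fun k => inv_pow_succ s (t + INR k)) (hurwitz s t).
Proof. intros Ht; apply Series_correct, ex_series_hurwitz, Ht. Qed.

Lemma inv_pow_succ_le_hurwitz (t : R) : 0 < t -> inv_pow_succ s t <= hurwitz s t.
Proof.
  intros Ht.
  pose proof (sum_incr _ 0 _ (proj1 (is_series_Reals _ _) (hurwitz_correct t Ht))) as H.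
  simpl in H; rewrite Rplus_0_r in H; apply H.
  intro k; left; apply inv_pow_succ_pos; pose proof (pos_INR k); lra.
Qed.

Lemma hurwitz_le (t : R) : 0 < t -> hurwitz s t <= inv_pow_succ s t + inv_pow_prim s (t + / 2).
Proof.
  intros Ht; unfold hurwitz; rewrite Series_incr_1 by (apply ex_series_hurwitz, Ht).
  simpl (INR 0); rewrite Rplus_0_r; apply Rplus_le_compat_l.
  rewrite <- (is_series_unique _ _ (is_series_unit_int (t + / 2) ltac:(lra))).
  apply Series_le; [| eexists; apply is_series_unit_int; auto; lra].
  intro k; pose proof (pos_INR k); split; [left; apply inv_pow_succ_pos; rewrite S_INR; lra |].
  replace (t + INR (S k)) with (t + / 2 + INR k + / 2) by (rewrite S_INR; field).
  left; apply inv_pow_succ_midpoint_lt; auto; lra.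
Qed.

Lemma hurwitz_antitone (t t' : R) : 0 < t -> t <= t' -> hurwitz s t' <= hurwitz s t.
Proof.
  intros Ht Htt; apply Series_le; [| apply ex_series_hurwitz, Ht].
  intro k; pose proof (pos_INR k); split; [left; apply inv_pow_succ_pos; lra |].
  apply inv_pow_succ_le; lra.
Qed.

End SeriesBounds.

Section HurwitzContinuity.

Variable s : nat.
Hypothesis s_pos : (1 <= s)%nat.

Let s_succ_pos : (1 <= S s)%nat := le_S _ _ s_pos.

Lemma hurwitz_sub_le (t t' : R) : 0 < t -> t <= t' ->
  hurwitz s t - hurwitz s t' <= (t' - t) * INR (S s) * hurwitz (S s) t.
Proof.
  intros Ht Htt; unfold hurwitz.
  rewrite <- Series_minus, <- Series_scal_l by (apply ex_series_hurwitz; auto; lra).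
  apply Series_le.
  2: { apply (ex_series_ext
                (fun k => scal ((t' - t) * INR (S s)) (inv_pow_succ (S s) (t + INR k))));
         [reflexivity | apply (ex_series_scal_l (V := R_NormedModule)), ex_series_hurwitz; auto]. }
  intro k; pose proof (pos_INR k); split.
  - pose proof (inv_pow_succ_le s (t + INR k) (t' + INR k)); lra.
  - pose proof (inv_pow_succ_tangent_le s (t' + INR k) (t + INR k)); lra.
Qed.

Lemma hurwitz_lipschitz (r u v : R) : 0 < r -> r <= u -> r <= v ->
  Rabs (hurwitz s u - hurwitz s v) <= INR (S s) * hurwitz (S s) r * Rabs (u - v).
Proof.
  intros Hr.
  assert (Hord : forall a b, r <= a -> a <= b ->
            Rabs (hurwitz s a - hurwitz s b) <= INR (S s) * hurwitz (S s) r * Rabs (a - b)).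
  { intros a b Ha Hab.
    pose proof (hurwitz_antitone s s_pos a b ltac:(lra) Hab).
    pose proof (hurwitz_sub_le a b ltac:(lra) Hab).
    pose proof (hurwitz_antitone (S s) s_succ_pos r a Hr Ha).
    assert (0 <= INR (S s) * (b - a)) by (apply Rmult_le_pos; [apply pos_INR | lra]).
    rewrite Rabs_pos_eq, Rabs_minus_sym, Rabs_pos_eq by lra; nra. }
  intros Hu Hv; destruct (Rle_dec u v); [apply Hord; assumption |].
  rewrite Rabs_minus_sym, (Rabs_minus_sym u); apply Hord; lra.
Qed.

Lemma continuity_pt_hurwitz (t : R) : 0 < t -> continuity_pt (hurwitz s) t.
Proof.
  intros Ht; unfold continuity_pt, continue_in, limit1_in, limit_in; intros eps Heps.
  set (L := INR (S s) * hurwitz (S s) (t / 2)).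
  assert (HL : 0 <= L).
  { apply Rmult_le_pos; [apply pos_INR |].
    pose proof (inv_pow_succ_le_hurwitz (S s) s_succ_pos (t / 2) ltac:(lra)).
    pose proof (inv_pow_succ_pos (S s) (t / 2) ltac:(lra)); lra. }
  assert (Hd : 0 < eps / (L + 1)) by (apply Rdiv_lt_0_compat; lra).
  exists (Rmin (t / 2) (eps / (L + 1))); split; [apply Rmin_pos; lra |].
  intros u [_ Hu]; simpl in Hu |- *; unfold R_dist in Hu |- *.
  apply Rmin_Rgt in Hu as [Hu1 Hu2].
  assert (Hut : t / 2 <= u) by (apply Rabs_def2 in Hu1; lra).
  pose proof (hurwitz_lipschitz (t / 2) u t ltac:(lra) Hut ltac:(lra)) as Hlip; fold L in Hlip.
  assert (L * Rabs (u - t) <= L * (eps / (L + 1))) by (apply Rmult_le_compat_l; lra).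
  assert (eps - L * (eps / (L + 1)) = eps / (L + 1)) by (field; lra).
  lra.
Qed.

Lemma hurwitz_surjective (c : R) : 0 < c -> exists t, 0 < t /\ hurwitz s t = c.
Proof.
  intros Hc.
  set (t1 := / (c + 1)); set (t2 := 2 / c + 1).
  assert (Ht1 : 0 < t1 <= 1).
  { split; [apply Rinv_0_lt_compat; lra |].
    rewrite <- Rinv_1; apply Rinv_le_contravar; lra. }
  assert (Hc2 : 0 < 2 / c) by (apply Rdiv_lt_0_compat; lra).
  assert (Ht2 : 1 < t2) by (unfold t2; lra).
  assert (Hbig : c < hurwitz s t1).
  { pose proof (inv_le_inv_pow_succ s t1 Ht1).
    pose proof (inv_pow_succ_le_hurwitz s s_pos t1 ltac:(lra)).
    unfold t1 in *; rewrite Rinv_inv in *; lra. }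
  assert (Hsmall : hurwitz s t2 < c).
  { pose proof (hurwitz_le s s_pos t2 ltac:(lra)).
    pose proof (inv_pow_succ_le_inv s t2 ltac:(lra)).
    pose proof (inv_pow_prim_le_inv s s_pos (t2 + / 2) ltac:(lra)).
    assert (/ (t2 + / 2) < / t2) by (apply Rinv_lt_contravar; nra).
    assert (2 / t2 < c).
    { apply (Rmult_lt_reg_r t2); [lra |]; unfold Rdiv.
      rewrite Rmult_assoc, Rinv_l by lra; unfold t2; field_simplify; lra. }
    unfold Rdiv in *; lra. }
  destruct (IVT_interv (fun t => c - hurwitz s t) t1 t2) as [t [Ht Hz]].
  - intros a Ha; apply continuity_pt_minus.
    + apply continuity_pt_const; intros ? ?; reflexivity.
    + apply continuity_pt_hurwitz; lra.
  - lra.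
  - lra.
  - lra.
  - exists t; split; lra.
Qed.

End HurwitzContinuity.

Lemma is_series_scal_iff (c : R) (a : nat -> R) (l : R) : c <> 0 ->
  is_series (fun k => c * a k) (c * l) <-> is_series a l.
Proof.
  intros Hc; split; intro H.
  - apply (is_series_ext (fun k => / c * (c * a k)));
      [intro k; rewrite <- Rmult_assoc, Rinv_l, Rmult_1_l by exact Hc; reflexivity |].
    replace l with (/ c * (c * l)) by (field; exact Hc).
    apply (is_series_scal_l (V := R_NormedModule)), H.
  - apply (is_series_scal_l (V := R_NormedModule)), H.
Qed.

Lemma psi_abs_iff (n : nat) (t x : R) :
  psi_abs n t x <-> is_series (fun k => inv_pow_succ n (t + INR k)) (x / INR (fact n)).
Proof.
  assert (HF : INR (fact n) <> 0) by (apply not_0_INR, fact_neq_0).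
  unfold psi_abs; rewrite <- is_series_Reals.
  rewrite <- (is_series_scal_iff (INR (fact n)) (fun k => inv_pow_succ n (t + INR k))) by exact HF.
  replace (INR (fact n) * (x / INR (fact n))) with x by (field; exact HF).
  split; apply is_series_ext; intro k;
    unfold polygamma_term, inv_pow_succ; rewrite Nat.add_1_r; reflexivity.
Qed.

Lemma Rpower_root_pow (n : nat) (b : R) : (1 <= n)%nat -> 0 < b -> Rpower b (1 / INR n) ^ n = b.
Proof.
  intros Hn Hb; rewrite <- Rpower_pow, Rpower_mult by apply exp_pos.
  replace (1 / INR n * INR n) with 1 by (field; apply not_0_INR; lia).
  apply Rpower_1, Hb.
Qed.

Lemma inv_pow_prim_fact_root (n : nat) (x : R) : (1 <= n)%nat -> 0 < x ->
  inv_pow_prim n (Rpower (INR (fact (n - 1)) / x) (1 / INR n)) = x / INR (fact n).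
Proof.
  intros Hn Hx.
  assert (HF : 0 < INR (fact (n - 1))) by apply lt_0_INR, lt_O_fact.
  assert (Efact : INR (fact n) = INR n * INR (fact (n - 1))).
  { destruct n as [|m]; [lia |]; rewrite Nat.sub_succ, Nat.sub_0_r, <- mult_INR; reflexivity. }
  unfold inv_pow_prim; rewrite Rpower_root_pow, Efact by (try apply Rdiv_lt_0_compat; assumption).
  field; repeat split; try lra; apply not_0_INR; lia.
Qed.

Lemma lb_eq_unit_int_root (n : nat) (x : R) : (1 <= n)%nat -> 0 < x ->
  lb n x = unit_int_root n (Rpower (INR (fact (n - 1)) / x) (1 / INR n)).
Proof.
  intros Hn Hx.
  assert (HF : 0 < INR (fact (n - 1))) by apply lt_0_INR, lt_O_fact.
  set (a := Rpower (INR (fact (n - 1)) / x) (1 / INR n)).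
  assert (Ha : 0 < a) by apply exp_pos.
  assert (Han : a ^ n = INR (fact (n - 1)) / x)
    by (apply Rpower_root_pow; [| apply Rdiv_lt_0_compat]; assumption).
  assert (0 < (a + 1) ^ n) by (apply pow_lt; lra).
  unfold lb, unit_int_root, unit_int, inv_pow_prim; fold a.
  rewrite Han, Nat.add_1_r.
  f_equal; [| unfold Rdiv; ring].
  field; repeat split; try lra; apply not_0_INR; lia.
Qed.

Theorem theorem2p1 (n : nat) (x : R) :
  (1 <= n)%nat -> 0 < x ->
  (exists y, 0 < y /\ psi_abs n y x) /\
  (forall y, 0 < y -> psi_abs n y x -> lb n x < y /\ y < ub n x).
Proof.
  intros Hn Hx.
  set (a := Rpower (INR (fact (n - 1)) / x) (1 / INR n)).
  assert (Ha : 0 < a) by apply exp_pos.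
  split.
  - destruct (hurwitz_surjective n Hn (x / INR (fact n))) as [y [Hy Hz]].
    { apply Rdiv_lt_0_compat; [exact Hx | apply lt_0_INR, lt_O_fact]. }
    exists y; split; [exact Hy |].
    apply psi_abs_iff; rewrite <- Hz; apply hurwitz_correct; assumption.
  - intros y Hy Hpsi.
    apply psi_abs_iff in Hpsi.
    rewrite <- inv_pow_prim_fact_root in Hpsi by assumption; fold a in Hpsi.
    rewrite lb_eq_unit_int_root by assumption; unfold ub; fold a.
    split; [apply unit_int_root_lt_of_is_series; assumption |].
    apply lt_add_half_of_is_series in Hpsi; [lra | assumption ..].
Qed.
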